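(* Let $\mathcal P$ be a pre-Hahn-localizable family of probability measures on $(\Omega,\mathcal F)$ with a localization $\mathcal Q$ whose supports $\{S_Q\}_{Q\in\mathcal Q}$ are pairwise disjoint. Then for every $A\in\mathcal H_{\mathcal F}^{\mathcal Q}$ and every $Q\in\mathcal Q$ we have $A\cap S_Q\in\mathcal F$.
   Context: $\mathcal A\lll\mathcal B$ means every $A\in\mathcal A$ is absolutely continuous w.r.t. some $B\in\mathcal B$; $\mathrm{sconv}$ denotes countable convex combinations. $\mathcal P$ is pre-Hahn-localizable with localization $\mathcal Q$ (probability measures on $\mathcal F$) and supports $S_Q\in\mathcal F$ if $Q(S_R)=\delta_{QR}$ for $Q,R\in\mathcal Q$ and $\mathcal Q\lll\mathcal P\lll\mathrm{sconv}(\mathcal Q)$. The Hahn-extension is $\mathcal H_{\mathcal F}^{\mathcal Q}=\sigma\big(\mathcal F\cup\{\bigcup_{Q\in\mathcal Q}E_Q:E_Q\in\mathcal F,E_Q\subseteq S_Q\}\big)$. *)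

From HB Require Import structures.
From mathcomp Require Import all_boot all_order all_algebra.
From mathcomp Require Import all_classical all_reals all_analysis.
Set Implicit Arguments. Unset Strict Implicit. Unset Printing Implicit Defensive.
Import Order.TTheory GRing.Theory Num.Theory.
Local Open Scope classical_set_scope.
Local Open Scope ring_scope.

(* The measurable space (Omega, F) is a measurableType T; F = measurable. *)

Definition abs_cont d (T : measurableType d) (R : realType)
  (mu nu : set T -> \bar R) : Prop :=
  forall A, measurable A -> nu A = 0%E -> mu A = 0%E.

Definition fam_abs_cont d (T : measurableType d) (R : realType)
  (AA BB : set (set T -> \bar R)) : Prop :=
  forall mu, AA mu -> exists2 nu, BB nu & abs_cont mu nu.

Definition sconv d (T : measurableType d) (R : realType)
  (QQ : set (set T -> \bar R)) : set (set T -> \bar R) :=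
  [set nu | exists (c : nat -> R) (Qn : nat -> (set T -> \bar R)),
     (forall n, QQ (Qn n)) /\ (forall n, 0 <= c n) /\
     (\sum_(n <oo) (c n)%:E = 1)%E /\
     (forall A, nu A = \sum_(n <oo) ((c n)%:E * Qn n A))%E ].

Definition fam d (T : measurableType d) (R : realType)
  (PP : set (probability T R)) : set (set T -> \bar R) :=
  (fun p : probability T R => (p : set T -> \bar R)) @` PP.

Definition pre_Hahn_localization d (T : measurableType d) (R : realType)
  (PP QQ : set (probability T R)) (S : probability T R -> set T) : Prop :=
  (forall q, QQ q -> measurable (S q)) /\
  (forall q, QQ q -> q (S q) = 1%E) /\
  (forall q r, QQ q -> QQ r -> q <> r -> q (S r) = 0%E) /\
  fam_abs_cont (fam QQ) (fam PP) /\
  fam_abs_cont (fam PP) (sconv (fam QQ)).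

Definition Hahn_extension d (T : measurableType d) (R : realType)
  (QQ : set (probability T R)) (S : probability T R -> set T) : set (set T) :=
  <<s measurable `|`
      [set \bigcup_(q in QQ) E q | E in
         [set E : probability T R -> set T |
            forall q, QQ q -> measurable (E q) /\ E q `<=` S q]] >>.

(* Since the supports are pairwise disjoint and each E_q lies inside S_q, a
   generator \bigcup_q E_q of the Hahn extension meets S_q exactly in E_q, which
   is F-measurable.  Hence every generator lies in the sigma-algebra of sets B
   with B `&` S_q in F, and so does the whole Hahn extension. *)

From HB Require Import structures.
From mathcomp Require Import all_boot all_order all_algebra.
From mathcomp Require Import all_classical all_reals all_analysis.
Local Open Scope classical_set_scope.

Definition measurable_trace {d : measure_display} {T : measurableType d}
  (D : set T) : set (set T) := [set B | measurable (B `&` D)].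

Section measurable_trace.
Context {d : measure_display} {T : measurableType d} {D : set T}.
Hypothesis mD : measurable D.

Lemma sigma_algebra_measurable_trace : sigma_algebra setT (measurable_trace D).
Proof.
split.
- by rewrite /measurable_trace /= set0I.
- move=> B mBD; rewrite /measurable_trace /= setTD.
  have -> : ~` B `&` D = D `\` (B `&` D).
    by rewrite setDIr setDv setU0 setDE setIC.
  exact: measurableD.
- move=> F mFD; rewrite /measurable_trace /= setI_bigcupl.
  exact: bigcupT_measurable.
Qed.

Lemma measurable_sub_trace : measurable `<=` measurable_trace D.
Proof. by move=> B mB; exact: measurableI. Qed.

End measurable_trace.

Lemma bigcup_setI_disjoint_supports {T I : Type} {J : set I} {S E : I -> set T} :
  (forall i j, J i -> J j -> i <> j -> S i `&` S j = set0) ->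
  (forall i, J i -> E i `<=` S i) ->
  forall j, J j -> (\bigcup_(i in J) E i) `&` S j = E j.
Proof.
move=> disjS ES j Jj; apply/seteqP; split => [x [[i Ji Eix] Sjx]|x Ejx].
- have [<- //|neq_ij] := pselect (i = j).
  have : (S i `&` S j) x by split => //; exact: ES.
  by rewrite disjS.
- by split; [exists j | exact: ES].
Qed.

Theorem lemma4p2 (d : measure_display) (T : measurableType d) (R : realType)
  (PP QQ : set (probability T R)) (S : probability T R -> set T) :
  pre_Hahn_localization PP QQ S ->
  (forall q r, QQ q -> QQ r -> q <> r -> S q `&` S r = set0) ->
  forall A, Hahn_extension QQ S A ->
  forall q, QQ q -> measurable (A `&` S q).
Proof.
move=> [mS _] disjS A HA q Qq.
suff : Hahn_extension QQ S `<=` measurable_trace (S q) by exact.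
apply: smallest_sub; first exact: sigma_algebra_measurable_trace (mS q Qq).
move=> B [mB|[E HE <-]]; first exact: measurable_sub_trace (mS q Qq) _ mB.
have ES r : QQ r -> E r `<=` S r by move=> /HE[].
rewrite /measurable_trace /= (bigcup_setI_disjoint_supports disjS ES q Qq).
by have [] := HE q Qq.
Qed.
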